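(* Consider a well-posed network $\Sigma$ and nonempty closed sets $\mathcal{A}_i\subset\mathbb{R}^{n_i}$, $i\in\mathbb{N}$, and let $\mathcal{A}:=\{x\in X: x_i\in\mathcal{A}_i\ \forall i\}$. Suppose $\Sigma$ is eISS with respect to $\mathcal{A}$. Then there exist $M\in\mathbb{N}$ and continuous functions $W_i:\mathbb{R}^{n_i}\to[0,\infty)$, $i\in\mathbb{N}$, together with $\underline\omega_i,\overline\omega_i\in\mathcal{K}_\infty$, $\gamma_{ij}\in\mathcal{K}_\infty\cup\{0\}$, $\gamma_{iu}\in\mathcal{K}$ ($i,j\in\mathbb{N}$) such that: (1) $\underline\omega_i(|\xi_i|_{\mathcal{A}_i})\le W_i(\xi_i)\le\overline\omega_i(|\xi_i|_{\mathcal{A}_i})$ for all $i$ and $\xi_i\in\mathbb{R}^{n_i}$; (2) $W_i(x_i(M,\xi,u))\le\max\{\sup_{j\in\mathbb{N}}\gamma_{ij}(W_j(\xi_j)),\gamma_{iu}(\|u\|_\infty)\}$ for all $i$, $\xi\in X$, $u\in\mathcal{U}$; (3) there exist $\underline\omega,\overline\omega\in\mathcal{K}_\infty$ with $\underline\omega\le\underline\omega_i\le\overline\omega_i\le\overline\omega$ for all $i$, $\alpha\in\mathcal{K}_\infty$ with $\alpha(s)<s$ for $s>0$ and $\gamma_{ij}\le\alpha$ for all $i,j$, and $\bar\gamma_u\in\mathcal{K}$ with $\gamma_{iu}\le\bar\gamma_u$ for all $i$.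
   Context: For each $i\in\mathbb{N}$ fix positive integers $n_i,p_i$, norms on $\mathbb{R}^{n_i},\mathbb{R}^{p_i}$, a finite set $I_i\subset\mathbb{N}\setminus\{i\}$ with every $\{j: i\in I_j\}$ finite, and continuous $f_i:\mathbb{R}^{n_i}\times\prod_{j\in I_i}\mathbb{R}^{n_j}\times\mathbb{R}^{p_i}\to\mathbb{R}^{n_i}$. $X$ (resp. $U$) the spaces of sequences $(x_i)$, $x_i\in\mathbb{R}^{n_i}$ (resp. $(u_i)$, $u_i\in\mathbb{R}^{p_i}$) with finite norm $|x|_\infty=\sup_i|x_i|$. $f(x,u)_i=f_i(x_i,(x_j)_{j\in I_i},u_i)$; network $\Sigma$: $x(k+1)=f(x(k),u(k))$; well-posed means $f(X\times U)\subset X$. $\mathcal{U}$: sequences $u:\mathbb{N}_0\to U$ with $\|u\|_\infty=\sup_k|u(k)|_\infty<\infty$; $x(k,\xi,u)$ the solution with $x(0)=\xi$, $x_i(k,\xi,u)$ its $i$-th component. $|z|_{\mathcal{A}_i}=\inf_{y\in\mathcal{A}_i}|z-y|$, $|x|_{\mathcal{A}}=\inf_{y\in\mathcal{A}}|x-y|_\infty$. $\Sigma$ is eISS w.r.t. $\mathcal{A}$ ($\mathcal{A}$ nonempty) if there exist $C\ge1$, $\rho\in[0,1)$, $\gamma\in\mathcal{K}$ with $|x(k,\xi,u)|_{\mathcal{A}}\le\max\{C\rho^k|\xi|_{\mathcal{A}},\gamma(\|u\|_\infty)\}$ for all $\xi\in X$, $u\in\mathcal{U}$, $k\in\mathbb{N}_0$.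 $\mathcal{K},\mathcal{K}_\infty$ standard comparison classes. *)

From HB Require Import structures.
From mathcomp Require Import all_boot all_order all_algebra.
From mathcomp Require Import all_classical all_reals ereal.

Set Implicit Arguments.
Unset Strict Implicit.
Unset Printing Implicit Defensive.

Import Order.TTheory GRing.Theory Num.Theory.
Local Open Scope ring_scope.
Local Open Scope classical_set_scope.

Section Defs.
Variable R : realType.

Definition is_norm (k : nat) (N : 'rV[R]_k -> R) : Prop :=
  (forall x, 0 <= N x) /\
  (forall x, N x = 0 -> x = 0) /\
  (forall (a : R) x, N (a *: x) = `|a| * N x) /\
  (forall x y, N (x + y) <= N x + N y).

Definition ncontinuous (k m : nat) (Nk : 'rV[R]_k -> R) (Nm : 'rV[R]_m -> R)
  (g : 'rV[R]_k -> 'rV[R]_m) : Prop :=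
  forall x (e : R), 0 < e -> exists d : R, 0 < d /\
    forall y, Nk (y - x) < d -> Nm (g y - g x) < e.

Definition ncontinuous_real (k : nat) (Nk : 'rV[R]_k -> R) (g : 'rV[R]_k -> R) : Prop :=
  forall x (e : R), 0 < e -> exists d : R, 0 < d /\
    forall y, Nk (y - x) < d -> `|g y - g x| < e.

Definition nclosed (k : nat) (Nk : 'rV[R]_k -> R) (A : set 'rV[R]_k) : Prop :=
  forall z, (forall e : R, 0 < e -> exists2 y, A y & Nk (z - y) < e) -> A z.

Definition dist_set (k : nat) (Nk : 'rV[R]_k -> R) (A : set 'rV[R]_k) (z : 'rV[R]_k) : R :=
  inf [set Nk (z - y) | y in A].

Definition cont_nonneg (g : R -> R) : Prop :=
  forall s, 0 <= s -> forall e : R, 0 < e -> exists d : R, 0 < d /\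
    forall t, 0 <= t -> `|t - s| < d -> `|g t - g s| < e.

Definition is_K (g : R -> R) : Prop :=
  cont_nonneg g /\ g 0 = 0 /\ (forall s t, 0 <= s -> s < t -> g s < g t).

Definition is_Kinf (g : R -> R) : Prop :=
  is_K g /\ (forall b : R, exists s, 0 <= s /\ b < g s).

Definition is_Kinf0 (g : R -> R) : Prop :=
  is_Kinf g \/ (forall s, 0 <= s -> g s = 0).

Definition fle (g h : R -> R) : Prop := forall s, 0 <= s -> g s <= h s.

Definition state (n : nat -> nat) := forall i : nat, 'rV[R]_(n i).

Definition supnorm (n : nat -> nat) (N : forall i, 'rV[R]_(n i) -> R) (x : state n) : R :=
  sup [set N i (x i) | i in [set: nat]].

(* membership in X (finite sup-norm) *)
Definition bounded_seq (n : nat -> nat) (N : forall i, 'rV[R]_(n i) -> R) (x : state n) : Prop :=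
  exists B : R, forall i, N i (x i) <= B.

(* A component function f_i : R^{n_i} x prod_{j in I_i} R^{n_j} x R^{p_i} -> R^{n_i}
   is encoded as  fi : R^{n_i} -> state n -> R^{p_i} -> R^{n_i}  which only depends on
   the coordinates j in I_i of its second argument, and is (jointly) continuous. *)
Definition local_dep (n : nat -> nat) (Ii : seq nat) (m q : nat)
  (fi : 'rV[R]_m -> state n -> 'rV[R]_q -> 'rV[R]_m) : Prop :=
  forall a x y v, (forall j, j \in Ii -> x j = y j) -> fi a x v = fi a y v.

Definition joint_continuous (n : nat -> nat) (N : forall i, 'rV[R]_(n i) -> R)
  (Ii : seq nat) (m q : nat) (Nm : 'rV[R]_m -> R) (Nq : 'rV[R]_q -> R)
  (fi : 'rV[R]_m -> state n -> 'rV[R]_q -> 'rV[R]_m) : Prop :=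
  forall a x v (e : R), 0 < e -> exists d : R, 0 < d /\
    forall b y w, Nm (b - a) < d -> (forall j, j \in Ii -> N j (y j - x j) < d) ->
      Nq (w - v) < d -> Nm (fi b y w - fi a x v) < e.

Definition netf (n p : nat -> nat)
  (f : forall i, 'rV[R]_(n i) -> state n -> 'rV[R]_(p i) -> 'rV[R]_(n i))
  (x : state n) (v : state p) : state n :=
  fun i => f i (x i) x (v i).

Fixpoint traj (n p : nat -> nat)
  (f : forall i, 'rV[R]_(n i) -> state n -> 'rV[R]_(p i) -> 'rV[R]_(n i))
  (xi : state n) (u : nat -> state p) (k : nat) : state n :=
  match k with
  | 0 => xi
  | k'.+1 => netf f (traj f xi u k') (u k')
  end.

Definition in_calU (p : nat -> nat) (Np : forall i, 'rV[R]_(p i) -> R)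
  (u : nat -> state p) : Prop :=
  (forall k, bounded_seq Np (u k)) /\
  exists B : R, forall k, supnorm Np (u k) <= B.

Definition inputnorm (p : nat -> nat) (Np : forall i, 'rV[R]_(p i) -> R)
  (u : nat -> state p) : R :=
  sup [set supnorm Np (u k) | k in [set: nat]].

Definition well_posed (n p : nat -> nat) (N : forall i, 'rV[R]_(n i) -> R)
  (Np : forall i, 'rV[R]_(p i) -> R)
  (f : forall i, 'rV[R]_(n i) -> state n -> 'rV[R]_(p i) -> 'rV[R]_(n i)) : Prop :=
  forall x v, bounded_seq N x -> bounded_seq Np v -> bounded_seq N (netf f x v).

Definition setA (n : nat -> nat) (N : forall i, 'rV[R]_(n i) -> R)
  (A : forall i, set 'rV[R]_(n i)) : set (state n) :=
  [set x | bounded_seq N x /\ forall i, A i (x i)].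

Definition dist_A (n : nat -> nat) (N : forall i, 'rV[R]_(n i) -> R)
  (A : forall i, set 'rV[R]_(n i)) (x : state n) : R :=
  inf [set supnorm N (fun i => x i - y i) | y in setA N A].

Definition eISS (n p : nat -> nat) (N : forall i, 'rV[R]_(n i) -> R)
  (Np : forall i, 'rV[R]_(p i) -> R)
  (f : forall i, 'rV[R]_(n i) -> state n -> 'rV[R]_(p i) -> 'rV[R]_(n i))
  (A : forall i, set 'rV[R]_(n i)) : Prop :=
  setA N A !=set0 /\
  exists (C rho : R) (gam : R -> R),
    1 <= C /\ 0 <= rho /\ rho < 1 /\ is_K gam /\
    forall (xi : state n) (u : nat -> state p) (k : nat),
      bounded_seq N xi -> in_calU Np u ->
      dist_A N A (traj f xi u k) <=
        Num.max (C * rho ^+ k * dist_A N A xi) (gam (inputnorm Np u)).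

End Defs.

(** Take [W_i := |.|_{A_i}], [omega_i s := s], [gamma_ij s := s / 2] and the eISS
    gain as [gamma_iu]. For [M] with [C rho^M <= 1/2],
    [|x_i(M)|_{A_i} <= |x(M)|_A <= max (|xi|_A / 2, gamma ||u||)], and
    [|xi|_A <= sup_j |xi_j|_{A_j}] because near-optimal points of the [A_j]
    assemble to a bounded point of [A]. *)
From HB Require Import structures.
From mathcomp Require Import all_boot all_order all_algebra.
From mathcomp Require Import all_classical all_reals ereal.
From mathcomp Require Import topology normedtype sequences.
From mathcomp Require Import lra.
Import numFieldNormedType.Exports.
Import Order.TTheory GRing.Theory Num.Theory.
Local Open Scope ring_scope.
Local Open Scope classical_set_scope.

Set Implicit Arguments.
Unset Strict Implicit.
Unset Printing Implicit Defensive.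

Section NormedRow.
Variables (R : realType) (k : nat) (N : 'rV[R]_k -> R).
Hypothesis hN : is_norm N.

Lemma is_normN x : N (- x) = N x.
Proof. by have [_ [_ [hZ _]]] := hN; rewrite -scaleN1r hZ normrN normr1 mul1r. Qed.

Lemma is_norm_ler_normB x y : N (x - y) <= N x + N y.
Proof. by have [_ [_ [_ hD]]] := hN; rewrite -(is_normN y) hD. Qed.

Lemma is_norm_ler_distD x y z : N (x - z) <= N (x - y) + N (y - z).
Proof. by have [_ [_ [_ hD]]] := hN; apply: le_trans (hD _ _); rewrite addrA subrK. Qed.

Variable A : set 'rV[R]_k.

Lemma dist_set_le z a : A a -> dist_set N A z <= N (z - a).
Proof.
move=> Aa; apply: ge_inf; last by exists a.
by exists 0 => _ [y _ <-]; exact: hN.1.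
Qed.

Hypothesis hA : A !=set0.

Lemma has_inf_dist_set z : has_inf [set N (z - y) | y in A].
Proof.
split; first by have [a Aa] := hA; exists (N (z - a)), a.
by exists 0 => _ [y _ <-]; exact: hN.1.
Qed.

Lemma dist_set_ge0 z : 0 <= dist_set N A z.
Proof.
apply: lb_le_inf; first exact: (has_inf_dist_set z).1.
by move=> _ [y _ <-]; exact: hN.1.
Qed.

Lemma dist_set_lipschitz z w : dist_set N A w <= N (w - z) + dist_set N A z.
Proof.
rewrite -lerBlDl; apply: lb_le_inf; first exact: (has_inf_dist_set z).1.
move=> _ [y Ay <-]; rewrite lerBlDl.
exact: le_trans (dist_set_le w Ay) (is_norm_ler_distD _ z _).
Qed.

Lemma dist_set_continuous : ncontinuous_real N (dist_set N A).
Proof.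
move=> x e e0; exists e; split => // y hy.
have := dist_set_lipschitz x y; have := dist_set_lipschitz y x.
rewrite -is_normN opprB; rewrite ltr_norml; lra.
Qed.

Lemma dist_set_adherent z e : 0 < e ->
  exists2 y, A y & N (z - y) < dist_set N A z + e.
Proof.
move=> e0; have [_ [y Ay <-] lt_e] := inf_adherent e0 (has_inf_dist_set z).
by exists y.
Qed.

End NormedRow.

Section SupNorm.
Variables (R : realType) (n : nat -> nat) (N : forall i, 'rV[R]_(n i) -> R).
Arguments N : clear implicits.

Lemma le_supnorm (x : state R n) (i : nat) : bounded_seq N x -> N i (x i) <= supnorm N x.
Proof.
move=> [B hB]; apply: ub_le_sup; last by exists i.
by exists B => _ [j _ <-].
Qed.

Lemma supnorm_le (x : state R n) (B : R) : (forall i, N i (x i) <= B) -> supnorm N x <= B.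
Proof.
move=> hB; apply: ge_sup; first by exists (N 0%N (x 0%N)), 0%N.
by move=> _ [j _ <-].
Qed.

Hypothesis hN : forall i, is_norm (N i).

Lemma bounded_seqB (x y : state R n) : bounded_seq N x -> bounded_seq N y ->
  bounded_seq N (fun i => x i - y i).
Proof.
move=> [B hB] [B' hB']; exists (B + B') => i.
exact: le_trans (is_norm_ler_normB (hN i) _ _) (lerD (hB i) (hB' i)).
Qed.

Variable A : forall i, set 'rV[R]_(n i).
Arguments A : clear implicits.

Lemma dist_A_lbound (x : state R n) : bounded_seq N x ->
  lbound [set supnorm N (fun i => x i - y i) | y in setA N A] 0.
Proof.
move=> xB _ [y [yB _] <-].
exact: le_trans ((hN 0%N).1 _) (le_supnorm 0%N (bounded_seqB xB yB)).
Qed.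

Lemma dist_A_le (x : state R n) (s : R) :
  (forall i, A i !=set0) -> bounded_seq N x ->
  (forall i, dist_set (N i) (A i) (x i) <= s) -> dist_A N A x <= s.
Proof.
move=> hAi xB hs; apply/ler_addgt0Pr => e e0.
have near_opt i := cid2 (dist_set_adherent (hN i) (hAi i) (x i) e0).
pose y i := s2val (near_opt i).
have yA i : A i (y i) := s2valP (near_opt i).
have xy_le i : N i (x i - y i) <= s + e.
  by apply: le_trans (ltW (s2valP' (near_opt i))) _; rewrite lerD2r.
have yB : bounded_seq N y.
  have [B hB] := xB; exists (B + (s + e)) => i.
  have -> : y i = x i - (x i - y i) by rewrite opprB addrC subrK.
  exact: le_trans (is_norm_ler_normB (hN i) _ _) (lerD (hB i) (xy_le i)).
apply: le_trans _ (supnorm_le (x := fun i => x i - y i) xy_le).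
apply: ge_inf; last by exists y; first split.
by exists 0; exact: dist_A_lbound xB.
Qed.

Hypothesis hA : setA N A !=set0.

Lemma dist_A_ge0 (x : state R n) : bounded_seq N x -> 0 <= dist_A N A x.
Proof.
move=> xB; apply: lb_le_inf; last exact: dist_A_lbound xB.
by have [y Ay] := hA; exists (supnorm N (fun i => x i - y i)), y.
Qed.

Lemma dist_set_le_dist_A (x : state R n) (i : nat) : bounded_seq N x ->
  dist_set (N i) (A i) (x i) <= dist_A N A x.
Proof.
move=> xB; apply: lb_le_inf.
  by have [y Ay] := hA; exists (supnorm N (fun i => x i - y i)), y.
move=> _ [y [yB yA] <-].
exact: le_trans (dist_set_le (hN i) _ (yA i)) (le_supnorm i (bounded_seqB xB yB)).
Qed.

End SupNorm.

Lemma traj_bounded (R : realType) (n p : nat -> nat) (N : forall i, 'rV[R]_(n i) -> R)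
    (Np : forall i, 'rV[R]_(p i) -> R) f xi u k :
  well_posed N Np f -> bounded_seq N xi -> in_calU Np u ->
  bounded_seq N (traj f xi u k).
Proof. by move=> hwp xiB [uB _]; elim: k => [|k IH] //=; exact: hwp. Qed.

Section ComparisonFunctions.
Variable R : realType.

Lemma is_Kinf_scale (c : R) : 0 < c -> is_Kinf (fun s => s * c).
Proof.
move=> c0; split; [split; [|split]|].
- move=> s _ e e0; exists (e / c); split; first exact: divr_gt0.
  by move=> t _; rewrite -mulrBl normrM (gtr0_norm c0) ltr_pdivlMr.
- by rewrite mul0r.
- by move=> s t _ st; rewrite ltr_pM2r.
- move=> b; exists ((`|b| + 1) / c); split; first by rewrite divr_ge0 // ltW.
  by rewrite mulfVK ?gt_eqF //; have := ler_norm b; lra.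
Qed.

Lemma is_Kinf_id : is_Kinf (fun s : R => s).
Proof.
have -> : (fun s : R => s) = fun s => s * 1 by apply/funext => s; rewrite mulr1.
exact: is_Kinf_scale ltr01.
Qed.

End ComparisonFunctions.

Lemma geometric_eventually_le (R : realType) (C rho e : R) :
  0 <= rho -> rho < 1 -> 0 < C -> 0 < e ->
  exists M : nat, (0 < M)%N /\ C * rho ^+ M <= e.
Proof.
move=> rho0 rho1 C0 e0.
have [M _ hM] : \forall M \near \oo, `|rho ^+ M| < e / C.
  by apply: cvgr0_norm_lt; [apply: cvg_expr; rewrite ger0_norm | exact: divr_gt0].
have /hM : (M <= M.+1)%N by [].
rewrite /= ger0_norm ?exprn_ge0 // ltr_pdivlMr // mulrC => /ltW hlt.
by exists M.+1.
Qed.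

Lemma le_ereal_supEFin (R : realType) (I : Type) (g : I -> R) (x : R) :
  (forall s, (forall i, g i <= s) -> x <= s) ->
  (x%:E <= ereal_sup [set (g i)%:E | i in [set: I]])%E.
Proof.
move=> hx; set S := ereal_sup _.
have ub i : ((g i)%:E <= S)%E by apply: ereal_sup_ubound; exists i.
case E: S => [s| |]; first by rewrite lee_fin; apply: hx => i; rewrite -lee_fin -E.
- exact: leey.
- suff : x <= x - 1 by rewrite lerDl oppr_ge0 ler10.
  by apply: hx => i; have := ub i; rewrite E leeNy_eq.
Qed.

Theorem theorem3 (R : realType)
  (n p : nat -> nat)
  (N : forall i, 'rV[R]_(n i) -> R) (Np : forall i, 'rV[R]_(p i) -> R)
  (I : nat -> seq nat)
  (f : forall i, 'rV[R]_(n i) -> state R n -> 'rV[R]_(p i) -> 'rV[R]_(n i))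
  (A : forall i, set 'rV[R]_(n i))
  (hn : forall i, (0 < n i)%N) (hp : forall i, (0 < p i)%N)
  (hN : forall i, is_norm (N i)) (hNp : forall i, is_norm (Np i))
  (hIi : forall i, i \notin I i)
  (hIfin : forall i, exists K : nat, forall j, i \in I j -> (j < K)%N)
  (hloc : forall i, local_dep (I i) (f i))
  (hcont : forall i, joint_continuous N (I i) (N i) (Np i) (f i))
  (hwp : well_posed N Np f)
  (hA0 : forall i, A i !=set0)
  (hAcl : forall i, nclosed (N i) (A i))
  (hiss : eISS N Np f A) :
  exists (M : nat) (W : forall i, 'rV[R]_(n i) -> R)
         (oml omu : nat -> R -> R) (gam : nat -> nat -> R -> R) (gamu : nat -> R -> R),
    (0 < M)%N /\
    (forall i, ncontinuous_real (N i) (W i) /\ forall z, 0 <= W i z) /\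
    (forall i, is_Kinf (oml i) /\ is_Kinf (omu i) /\ is_K (gamu i)) /\
    (forall i j, is_Kinf0 (gam i j)) /\
    (* (1) sandwich bounds *)
    (forall i (z : 'rV[R]_(n i)),
        oml i (dist_set (N i) (A i) z) <= W i z /\
        W i z <= omu i (dist_set (N i) (A i) z)) /\
    (* (2) small-gain type decay after M steps *)
    (forall i (xi : state R n) (u : nat -> state R p),
        bounded_seq N xi -> in_calU Np u ->
        ((W i (traj f xi u M i))%:E <=
          maxe (ereal_sup [set (gam i j (W j (xi j)))%:E | j in [set: nat]])
               (gamu i (inputnorm Np u))%:E)%E) /\
    (* (3) uniform bounds *)
    (exists (ol ou alpha gbar : R -> R),
        is_Kinf ol /\ is_Kinf ou /\ is_Kinf alpha /\ is_K gbar /\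
        (forall i, fle ol (oml i) /\ fle (oml i) (omu i) /\ fle (omu i) ou) /\
        (forall s, 0 < s -> alpha s < s) /\
        (forall i j, fle (gam i j) alpha) /\
        (forall i, fle (gamu i) gbar)).
Proof.
have [hA [C [rho [gu [C1 [rho0 [rho1 [gu_K hdecay]]]]]]]] := hiss.
have [M [M0 hM]] : exists M : nat, (0 < M)%N /\ C * rho ^+ M <= 2^-1.
  by apply: geometric_eventually_le; rewrite ?invr_gt0 //; exact: lt_le_trans ltr01 C1.
exists M, (fun i => dist_set (N i) (A i)), (fun _ s => s), (fun _ s => s),
  (fun _ _ s => s / 2), (fun _ => gu).
split=> //; split=> [i|].
  split=> [|z]; first exact: (dist_set_continuous (hN i) (hA0 i)).
  exact: (dist_set_ge0 (hN i) (hA0 i)).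
split=> [i|]; first by split; [exact: is_Kinf_id | split; [exact: is_Kinf_id | exact: gu_K]].
split=> [i j|]; first by left; apply: is_Kinf_scale; rewrite invr_gt0.
split=> [i z|]; first by split.
split; last first.
  exists (fun s => s), (fun s => s), (fun s => s / 2), gu.
  split; first exact: is_Kinf_id.
  split; first exact: is_Kinf_id.
  split; first by apply: is_Kinf_scale; rewrite invr_gt0.
  split; first exact: gu_K.
  split; first by move=> i; split; [|split] => s _.
  split; first by move=> s s0 /=; lra.
  by split=> [i j|i] s _.
move=> i xi u xiB uU; rewrite le_max; apply/orP.
have xMB := traj_bounded M hwp xiB uU.
have := le_trans (dist_set_le_dist_A hN hA i xMB) (hdecay xi u M xiB uU).
rewrite le_max => /orP[|hu]; last by right; rewrite lee_fin.
move=> /le_trans hxM; left; apply: le_ereal_supEFin => s hs; apply: hxM.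
have dA0 := dist_A_ge0 hN hA xiB.
have : dist_A N A xi <= s * 2 by apply: dist_A_le => // j; rewrite -ler_pdivrMr // hs.
have := ler_wpM2r dA0 hM; lra.
Qed.
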